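(* Let $V\in(\mathbb{R}\cup\{-\infty\})^{n\times p}$ have no row and no column identically equal to $-\infty$, and let $T$ be the operator $$T_i(x)=\inf_{k\in[p],\,(i,k)\in E}\Big[-V_{ik}+\max_{j\in[n],\,j\neq i}(V_{jk}+x_j)\Big],\qquad i\in[n],$$ with $E=\{(i,k): V_{ik}\neq-\infty\}$. Then for all $\lambda\in[-\infty,0]$ and all $a\in\mathbb{R}^n$, $$B(-a,-\lambda)\subset\operatorname{Col}(V)\iff T(a)\le \lambda+a.$$
   Context: $\mathbb{R}_{\max}=\mathbb{R}\cup\{-\infty\}$, with $-\infty+c=-\infty$ and the maximum of an empty family equal to $-\infty$; $\lambda+a$ denotes $(\lambda+a_i)_i$ (so $-\infty+a$ is the identically $-\infty$ vector). $\operatorname{Col}(V)=\{Vx:x\in\mathbb{R}_{\max}^p\}$ with $(Vx)_i=\max_k(V_{ik}+x_k)$. Hilbert's projective metric: $d(x,y)=\inf\{\lambda-\mu:\lambda,\mu\in\mathbb{R},\ \mu+y_i\le x_i\le\lambda+y_i\ \forall i\}\in[0,+\infty]$. For $c\in\mathbb{R}^n$ and $r\in[0,+\infty]$, $B(c,r)=\{x\in\mathbb{R}_{\max}^n: d(c,x)\le r\}$ (so $B(c,+\infty)=\mathbb{R}^n$). *)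

(* R : realType, R_max is embedded in \bar R as the
   elements different from +oo. *)
From HB Require Import structures.
From mathcomp Require Import all_boot all_order all_algebra.
From mathcomp Require Import all_classical all_reals ereal.
Set Implicit Arguments. Unset Strict Implicit. Unset Printing Implicit Defensive.
Import Order.TTheory GRing.Theory Num.Theory.
Local Open Scope ring_scope.
Local Open Scope ereal_scope.
Local Open Scope classical_set_scope.

Section Defs.
Variable R : realType.

(* (Vx)_i = max_k (V_ik + x_k); empty max = -oo; -oo is absorbing for + *)
Definition maxplus_apply (n p : nat) (V : 'I_n -> 'I_p -> \bar R)
  (x : 'I_p -> \bar R) : 'I_n -> \bar R :=
  fun i => \big[maxe/-oo]_(k < p) (V i k + x k).

Definition Col (n p : nat) (V : 'I_n -> 'I_p -> \bar R) : set ('I_n -> \bar R) :=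
  [set z | exists x : 'I_p -> \bar R,
      (forall k, x k != +oo) /\ z = maxplus_apply V x].

(* Hilbert's projective metric, value in [0,+oo] (inf of empty set = +oo) *)
Definition hilbert (n : nat) (x y : 'I_n -> \bar R) : \bar R :=
  ereal_inf [set z | exists l m : R,
    (forall i, (m%:E + y i <= x i) /\ (x i <= l%:E + y i)) /\
    z = ((l - m)%R)%:E].

(* B(c,r), c in R^n, r in [0,+oo];  B(c,+oo) = R^n by convention *)
Definition hball (n : nat) (c : 'I_n -> R) (r : \bar R) : set ('I_n -> \bar R) :=
  [set x | (forall i, x i != +oo) /\
           (if r is +oo then (forall i, x i \is a fin_num)
            else hilbert (fun i => (c i)%:E) x <= r)].

Definition Top (n p : nat) (V : 'I_n -> 'I_p -> \bar R) (x : 'I_n -> \bar R)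
  : 'I_n -> \bar R :=
  fun i => \big[mine/+oo]_(k < p | V i k != -oo)
             (- V i k + \big[maxe/-oo]_(j < n | j != i) (V j k + x j)).

End Defs.

From HB Require Import structures.
From mathcomp Require Import all_boot all_order all_algebra.
From mathcomp Require Import all_classical all_reals ereal.
From mathcomp Require Import lra.

Set Implicit Arguments.
Unset Strict Implicit.
Unset Printing Implicit Defensive.
Import Order.TTheory GRing.Theory Num.Theory.
Local Open Scope ring_scope.
Local Open Scope ereal_scope.
Local Open Scope classical_set_scope.

(* The natural preimage of y is the residuation x_k = min_{i, V_ik > -oo} (y_i - V_ik),
   which always satisfies Vx <= y; hence y lies in Col(V) as soon as every row i has a
   column k at which y_i - V_ik attains that minimum.  A column realising T_i(a) provides
   such a k for every y in B(-a,-lam): it gives V_jk - V_ik <= lam + a_i - a_j, while the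
   ball gives y_i - y_j <= a_j - a_i - lam.  Conversely, the vector equal to -a, plus lam
   off row i, lies in the ball; a column k realising its i-th entry as (Vx)_i yields
   T_i(a) <= lam + a_i. *)

Section HilbertBall.
Variables (R : realType) (n : nat).
Implicit Types (c d : 'I_n -> R) (x y : 'I_n -> \bar R).

Lemma hilbert_le x y (l m : R) :
  (forall i, m%:E + y i <= x i /\ x i <= l%:E + y i) -> hilbert x y <= (l - m)%:E.
Proof. by move=> xy; apply: ereal_inf_lbound; exists l, m. Qed.

Lemma hilbert_ge_diff c d i j :
  ((c i - d i) - (c j - d j))%:E <=
    hilbert (fun i => (c i)%:E) (fun i => (d i)%:E).
Proof.
apply/ereal_infP => _ [l [m [cd ->]]].
have [_ ] := cd i; have [ ] := cd j.
by rewrite -!EFinD !lee_fin => *; lra.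
Qed.

Lemma hilbert_fin_num c y :
  hilbert (fun i => (c i)%:E) y < +oo -> forall i, y i \is a fin_num.
Proof.
move=> /ereal_inf_lt[_ [l [m [cy _]]] _] i.
by have [] := cy i; case: (y i).
Qed.

Lemma hball_fin_num c r y : hball c r y -> forall i, y i \is a fin_num.
Proof.
case: r => [r| |] [_] //= cy; apply: hilbert_fin_num; apply: le_lt_trans cy _.
  exact: ltry.
exact: ltNye_eq.
Qed.

Lemma hball_sub_pinfty c r : hball c r `<=` hball c +oo.
Proof. by move=> y yB; split; [case: yB | exact: hball_fin_num yB]. Qed.

End HilbertBall.

Section MaxPlus.
Variables (R : realType) (n p : nat) (V : 'I_n -> 'I_p -> \bar R).
Hypothesis V_neq_pinfty : forall i k, V i k != +oo.

Lemma V_fin_num i k : V i k != -oo -> V i k \is a fin_num.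
Proof. by move=> Vik; rewrite fin_numE Vik V_neq_pinfty. Qed.

Definition maxplus_residual (y : 'I_n -> \bar R) : 'I_p -> \bar R :=
  fun k => \big[mine/+oo]_(i < n | V i k != -oo) (y i - V i k).

Lemma maxplus_apply_residual_le y i :
  maxplus_apply V (maxplus_residual y) i <= y i.
Proof.
apply: bigmax_le => [|k _]; first exact: leNye.
have [->|Vik] := eqVneq (V i k) -oo; first by rewrite addNye leNye.
by rewrite addeC -leeBrDr ?V_fin_num //; exact: bigmin_le_cond.
Qed.

Lemma maxplus_residual_neq_pinfty y k :
  (exists i, V i k != -oo) -> (forall i, y i != +oo) -> maxplus_residual y k != +oo.
Proof.
move=> [i Vik] y_neq_pinfty; rewrite -ltey /maxplus_residual.
apply: le_lt_trans (bigmin_le_cond _ (fun i => y i - V i k) Vik) _.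
by rewrite lte_add_pinfty ?ltey //; case: (V i k) Vik.
Qed.

Lemma Col_of_cover y :
  (forall k, exists i, V i k != -oo) -> (forall i, y i != +oo) ->
  (forall i, exists2 k, V i k != -oo &
     forall j, V j k != -oo -> y i - V i k <= y j - V j k) ->
  Col V y.
Proof.
move=> Vcol y_neq_pinfty cover; exists (maxplus_residual y); split.
  by move=> k; exact: maxplus_residual_neq_pinfty.
apply/funext => i; apply/eqP; rewrite eq_le maxplus_apply_residual_le andbT.
have [k Vik yik] := cover i.
apply: le_trans (le_bigmax _ _ k); rewrite addeC -leeBlDr ?V_fin_num //.
by apply/bigmin_geP; split; [exact: leey | exact: yik].
Qed.

Lemma Top_leP (x : 'I_n -> \bar R) i z : z != +oo ->
  Top V x i <= z <->
  exists2 k, V i k != -oo & forall j, j != i -> V j k + x j <= z + V i k.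
Proof.
move=> z_neq_pinfty; split.
  case/bigmin_leP => [|[k Vik]]; first by rewrite leye_eq (negbTE z_neq_pinfty).
  by rewrite addeC leeBlDr ?V_fin_num // => /bigmax_leP[_ ?]; exists k.
move=> [k Vik xk]; apply/bigmin_leP; right; exists k => //.
by rewrite addeC leeBlDr ?V_fin_num //; apply/bigmax_leP; split; [exact: leNye|].
Qed.

Lemma Top_le_of_hball_sub_Col (a : 'I_n -> R) (mu : R) : (mu <= 0)%R ->
  hball (fun i => (- a i)%R) (- mu%:E) `<=` Col V ->
  forall i, Top V (fun j => (a j)%:E) i <= mu%:E + (a i)%:E.
Proof.
move=> mu_le0 ball_sub_Col i.
pose w j := (if j == i then - a j else mu - a j)%:E.
have w_ball : hball (fun j => (- a j)%R) (- mu%:E) w.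
  split=> [j|]; first by rewrite /w.
  rewrite /= -[X in _ <= X%:E]subr0; apply: hilbert_le => j; rewrite /w.
  by case: eqP => _; rewrite -EFinD !lee_fin; split; lra.
have [x [x_neq_pinfty w_Vx]] := ball_sub_Col _ w_ball.
have Vx_le_w j k : V j k + x k <= w j by rewrite w_Vx; exact: le_bigmax.
have : w i <= maxplus_apply V x i by rewrite -w_Vx.
case/bigmax_geP => [|[k _ wi_le]]; first by rewrite /w eqxx.
have Vik : V i k != -oo by apply: contraTneq wi_le => ->; rewrite addNye.
have xk_fin : x k \is a fin_num.
  rewrite fin_numE x_neq_pinfty andbT.
  by apply: contraTneq wi_le => ->; rewrite addeNy.
have z_neq_pinfty : mu%:E + (a i)%:E != +oo by rewrite -EFinD.
apply/(Top_leP _ _ z_neq_pinfty); exists k => // j ji; move: wi_le (Vx_le_w j k).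
rewrite /w eqxx (negbTE ji) -(fineK (V_fin_num Vik)) -(fineK xk_fin).
case: (V j k) (V_neq_pinfty j k) => [u _| // |_ _ _]; last by rewrite addNye leNye.
by rewrite -!EFinD !lee_fin => *; lra.
Qed.

Lemma hball_sub_Col_of_Top_le (a : 'I_n -> R) (lam : \bar R) :
  (forall k, exists i, V i k != -oo) -> lam <= 0 ->
  (forall i, Top V (fun j => (a j)%:E) i <= lam + (a i)%:E) ->
  hball (fun i => (- a i)%R) (- lam) `<=` Col V.
Proof.
move=> Vcol lam_le0 Ta y yB.
have [d y_EFin] : exists d : 'I_n -> R, y = fun i => (d i)%:E.
  by exists (fun i => fine (y i)); apply/funext => i; rewrite fineK ?(hball_fin_num yB).
rewrite y_EFin in yB *; apply: Col_of_cover => // i.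
have [k Vik ik] : exists2 k, V i k != -oo &
    forall j, j != i -> V j k + (a j)%:E <= lam + (a i)%:E + V i k.
  apply/Top_leP => //; rewrite -ltey lte_add_pinfty ?ltry //.
  exact: le_lt_trans lam_le0 (ltry 0).
exists k => // j Vjk; have [->|ji] := eqVneq j i; first exact: lexx.
move: (ik j ji); rewrite -(fineK (V_fin_num Vik)) -(fineK (V_fin_num Vjk)).
case: lam lam_le0 {Ta ik} yB => [mu _ [_ /= dB]| |] //.
have := le_trans (hilbert_ge_diff (fun i => - a i)%R d j i) dB.
by rewrite -!EFinD !lee_fin => *; lra.
Qed.

End MaxPlus.

Theorem lemma3p4 (R : realType) (n p : nat) (V : 'I_n -> 'I_p -> \bar R)
  (HV : forall i k, V i k != +oo)
  (Hrow : forall i, exists k, V i k != -oo)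
  (Hcol : forall k, exists i, V i k != -oo)
  (lam : \bar R) (Hlam : lam <= 0) (a : 'I_n -> R) :
  (hball (fun i => (- a i)%R) (- lam) `<=` Col V) <->
  (forall i, Top V (fun j => (a j)%:E) i <= lam + (a i)%:E).
Proof.
split; last exact: hball_sub_Col_of_Top_le.
case: lam Hlam => [mu | // | _ ball_sub_Col i].
  by rewrite lee_fin => mu_le0 ball_sub_Col; exact: Top_le_of_hball_sub_Col.
rewrite addNye leeNy_eq; apply/eqP/eq_ninfty => r.
have mu_le0 : (Num.min 0 (r - a i) <= 0)%R by rewrite ge_min lexx.
have ball_sub_Col' := subset_trans (@hball_sub_pinfty _ _ _ _) ball_sub_Col.
apply: le_trans (Top_le_of_hball_sub_Col HV mu_le0 (ball_sub_Col' _) i) _.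
by rewrite -EFinD lee_fin -lerBrDr ge_min lexx orbT.
Qed.
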